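(* Let $P,Q\in\Gamma_n$ and $0<r\le R$ with $r\le p_i/q_i\le R$ for all $i$. Let $s,t\in\mathbb{R}$ with $0\le s\le4$ and $t\ge-1$. Then $$\frac{1}{R^{s+1}}\Big(\frac{R+1}{2}\Big)^{s-t-1}\big[(4-s)R+s\big]\Omega_t(Q\|P)\le\zeta_s(Q\|P)\le\frac{1}{r^{s+1}}\Big(\frac{r+1}{2}\Big)^{s-t-1}\big[(4-s)R+s\big]\Omega_t(Q\|P).$$
   Context: $\Gamma_n=\{P=(p_1,\dots,p_n): p_i>0,\ \sum_i p_i=1\}$, $n\ge2$. For $P,Q\in\Gamma_n$ and $s\in\mathbb{R}$: $\Omega_s(Q\|P)=[s(s-1)]^{-1}\big[\sum_i q_i\big(\frac{p_i+q_i}{2q_i}\big)^s-1\big]$ for $s\ne0,1$; $\Omega_0(Q\|P)=\sum_i q_i\ln\frac{2q_i}{p_i+q_i}$; $\Omega_1(Q\|P)=\sum_i\frac{p_i+q_i}{2}\ln\frac{p_i+q_i}{2q_i}$. $\zeta_s(Q\|P)=(s-1)^{-1}\sum_i(q_i-p_i)\big(\frac{p_i+q_i}{2p_i}\big)^{s-1}$ for $s\ne1$; $\zeta_1(Q\|P)=\sum_i(q_i-p_i)\ln\frac{p_i+q_i}{2p_i}$. *)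

From Stdlib Require Import Reals.
Open Scope R_scope.

Fixpoint rsum (n : nat) (f : nat -> R) : R :=
  match n with
  | O => 0
  | S m => rsum m f + f m
  end.

Definition Gamma (n : nat) (p : nat -> R) : Prop :=
  (forall i, (i < n)%nat -> 0 < p i) /\ rsum n p = 1.

Definition Omega (n : nat) (s : R) (q p : nat -> R) : R :=
  if Req_EM_T s 0 then
    rsum n (fun i => q i * ln (2 * q i / (p i + q i)))
  else if Req_EM_T s 1 then
    rsum n (fun i => (p i + q i) / 2 * ln ((p i + q i) / (2 * q i)))
  else
    / (s * (s - 1)) *
    (rsum n (fun i => q i * Rpower ((p i + q i) / (2 * q i)) s) - 1).

Definition zeta (n : nat) (s : R) (q p : nat -> R) : R :=
  if Req_EM_T s 1 then
    rsum n (fun i => (q i - p i) * ln ((p i + q i) / (2 * p i)))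
  else
    / (s - 1) *
    rsum n (fun i => (q i - p i) * Rpower ((p i + q i) / (2 * p i)) (s - 1)).

From Stdlib Require Import Reals Lra Lia.
From Coquelicot Require Import Coquelicot.
Open Scope R_scope.

(* Both Omega_t and zeta_s are Csiszar divergences sum_i q_i f(p_i/q_i) whose
   generators f vanish at 1, and their second derivatives satisfy
   d2_zeta_gen = d2_omega_gen * rho(x) * ((4 - s) x + s) with
   rho(x) = dens_ratio s t x = x^-(s+1) ((x+1)/2)^(s-t-1).  For 0 <= s <= 4 and t >= -1 the map
   x * rho(x) is nonincreasing, so on [r, R] the factor rho(x) ((4 - s) x + s) lies
   between the two constants m and M of the statement.  Hence zeta_gen - m omega_gen
   and M omega_gen - zeta_gen are convex and vanish at 1; a convex generator lies
   above its tangent at 1, and the tangent term sums to 0 because sum p = sum q. *)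

Lemma rsum_ext n f g :
  (forall i, (i < n)%nat -> f i = g i) -> rsum n f = rsum n g.
Proof.
induction n as [|n IH]; intros H; simpl; [reflexivity|].
rewrite (H n) by lia; f_equal; apply IH; intros i hi; apply H; lia.
Qed.

Lemma rsum_le n f g :
  (forall i, (i < n)%nat -> f i <= g i) -> rsum n f <= rsum n g.
Proof.
induction n as [|n IH]; intros H; simpl; [lra|].
apply Rplus_le_compat; [apply IH; intros i hi|]; apply H; lia.
Qed.

Lemma rsum_scal n c f : rsum n (fun i => c * f i) = c * rsum n f.
Proof. induction n as [|n IH]; simpl; [ring|rewrite IH; ring]. Qed.

Lemma rsum_minus n f g : rsum n (fun i => f i - g i) = rsum n f - rsum n g.
Proof. induction n as [|n IH]; simpl; [ring|rewrite IH; ring]. Qed.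

Lemma ratio_bounds_contain_1 n p q a b :
  (forall i, (i < n)%nat -> 0 < q i) -> rsum n p = rsum n q -> 0 < rsum n q ->
  (forall i, (i < n)%nat -> a <= p i / q i <= b) -> a <= 1 <= b.
Proof.
intros hq hpq hsq hab.
assert (ha : rsum n (fun i => a * q i) <= rsum n p).
{ apply rsum_le; intros i hi; specialize (hab i hi); specialize (hq i hi).
  replace (p i) with (p i / q i * q i) by (field; lra).
  apply Rmult_le_compat_r; lra. }
assert (hb : rsum n p <= rsum n (fun i => b * q i)).
{ apply rsum_le; intros i hi; specialize (hab i hi); specialize (hq i hi).
  replace (p i) with (p i / q i * q i) by (field; lra).
  apply Rmult_le_compat_r; lra. }
rewrite rsum_scal in ha, hb; nra.
Qed.

Lemma nondecreasing_of_derive_nonneg F F1 a b :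
  (forall x, a <= x <= b -> is_derive F x (F1 x)) ->
  (forall x, a <= x <= b -> 0 <= F1 x) ->
  forall x y, a <= x -> x <= y -> y <= b -> F x <= F y.
Proof.
intros hd hpos x y hax hxy hyb.
destruct (Rle_lt_or_eq_dec _ _ hxy) as [lt|<-]; [|lra].
destruct (MVT_cor2 F F1 x y lt) as [c [hc hcxy]].
- intros c hc; apply is_derive_Reals, hd; lra.
- assert (0 <= F1 c) by (apply hpos; lra); nra.
Qed.

Definition twice_derivable_on (a b : R) (F F2 : R -> R) : Prop :=
  exists F1, forall x, a <= x <= b -> is_derive F x (F1 x) /\ is_derive F1 x (F2 x).

Lemma twice_derivable_on_scal a b c F F2 :
  twice_derivable_on a b F F2 ->
  twice_derivable_on a b (fun x => c * F x) (fun x => c * F2 x).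
Proof.
intros [F1 hF]; exists (fun x => c * F1 x); intros x hx.
split; apply is_derive_scal, hF, hx.
Qed.

Lemma twice_derivable_on_minus a b F F2 G G2 :
  twice_derivable_on a b F F2 -> twice_derivable_on a b G G2 ->
  twice_derivable_on a b (fun x => F x - G x) (fun x => F2 x - G2 x).
Proof.
intros [F1 hF] [G1 hG]; exists (fun x => F1 x - G1 x); intros x hx.
split; apply (is_derive_minus (V := R_NormedModule));
  [apply hF|apply hG|apply hF|apply hG]; exact hx.
Qed.

Lemma convex_supporting_line a b c F F2 :
  twice_derivable_on a b F F2 -> (forall x, a <= x <= b -> 0 <= F2 x) -> a <= c <= b ->
  exists m, forall x, a <= x <= b -> F c + m * (x - c) <= F x.
Proof.
intros [F1 hF] hF2 hc; exists (F1 c); intros x hx.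
assert (hmono := nondecreasing_of_derive_nonneg F1 F2 a b
                   (fun y hy => proj2 (hF y hy)) hF2).
destruct (Rtotal_order x c) as [lt|[->|gt]]; [| lra |].
- destruct (MVT_cor2 F F1 x c lt) as [e [he hxe]].
  + intros y hy; apply is_derive_Reals, hF; lra.
  + assert (F1 e <= F1 c) by (apply hmono; lra); nra.
- destruct (MVT_cor2 F F1 c x gt) as [e [he hxe]].
  + intros y hy; apply is_derive_Reals, hF; lra.
  + assert (F1 c <= F1 e) by (apply hmono; lra); nra.
Qed.

Lemma csiszar_scal n p q c F :
  rsum n (fun i => q i * (c * F (p i / q i))) = c * rsum n (fun i => q i * F (p i / q i)).
Proof.
rewrite <- rsum_scal; apply rsum_ext; intros; ring.
Qed.

Section Csiszar.

Variables (n : nat) (p q : nat -> R) (a b : R).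
Hypothesis q_pos : forall i, (i < n)%nat -> 0 < q i.
Hypothesis sum_p_q : rsum n p = rsum n q.
Hypothesis ratio_range : forall i, (i < n)%nat -> a <= p i / q i <= b.
Hypothesis range_1 : a <= 1 <= b.

Lemma csiszar_nonneg F F2 :
  twice_derivable_on a b F F2 -> (forall x, a <= x <= b -> 0 <= F2 x) -> F 1 = 0 ->
  0 <= rsum n (fun i => q i * F (p i / q i)).
Proof.
intros hF hF2 hF1.
destruct (convex_supporting_line a b 1 F F2 hF hF2 range_1) as [m hm].
apply Rle_trans with (rsum n (fun i => m * (p i - q i))).
- rewrite rsum_scal, rsum_minus, sum_p_q; lra.
- apply rsum_le; intros i hi.
  assert (hqi := q_pos i hi); assert (hline := hm _ (ratio_range i hi)).
  replace (m * (p i - q i)) with (q i * (F 1 + m * (p i / q i - 1))) by (rewrite hF1; field; lra).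
  apply Rmult_le_compat_l; lra.
Qed.

Lemma csiszar_le F F2 G G2 :
  twice_derivable_on a b F F2 -> twice_derivable_on a b G G2 ->
  (forall x, a <= x <= b -> G2 x <= F2 x) -> F 1 = 0 -> G 1 = 0 ->
  rsum n (fun i => q i * G (p i / q i)) <= rsum n (fun i => q i * F (p i / q i)).
Proof.
intros hF hG hFG hF1 hG1.
assert (h := csiszar_nonneg (fun x => F x - G x) (fun x => F2 x - G2 x)
               (twice_derivable_on_minus a b F F2 G G2 hF hG)
               ltac:(intros x hx; specialize (hFG x hx); lra) ltac:(lra)).
rewrite (rsum_ext n _ (fun i => q i * F (p i / q i) - q i * G (p i / q i))),
  rsum_minus in h by (intros; ring).
lra.
Qed.

End Csiszar.

Definition omega_gen (t x : R) : R :=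
  if Req_EM_T t 0 then - ln ((x + 1) / 2)
  else if Req_EM_T t 1 then (x + 1) / 2 * ln ((x + 1) / 2)
  else (Rpower ((x + 1) / 2) t - 1) / (t * (t - 1)).

Definition zeta_gen (s x : R) : R :=
  if Req_EM_T s 1 then (1 - x) * ln ((x + 1) / (2 * x))
  else (1 - x) * Rpower ((x + 1) / (2 * x)) (s - 1) / (s - 1).

Definition d2_omega_gen (t x : R) : R := Rpower ((x + 1) / 2) t / (x + 1) ^ 2.

Definition d2_zeta_gen (s x : R) : R :=
  Rpower ((x + 1) / (2 * x)) (s - 1) * ((4 - s) * x + s) / (x ^ 2 * (x + 1) ^ 2).

Lemma omega_gen_twice_derivable a b t :
  0 < a -> twice_derivable_on a b (omega_gen t) (d2_omega_gen t).
Proof.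
intros ha; unfold omega_gen, d2_omega_gen, Rpower, Rdiv.
destruct (Req_EM_T t 0) as [->|t0]; [|destruct (Req_EM_T t 1) as [->|t1]].
- exists (fun x => - / (x + 1)); intros x hx; split; auto_derive; try lra.
  + field; lra.
  + rewrite Rmult_0_l, exp_0; field; lra.
- exists (fun x => (ln ((x + 1) * / 2) + 1) * / 2); intros x hx; split; auto_derive; try lra.
  + field; lra.
  + rewrite (Rmult_1_l (ln _)), exp_ln by lra; field; lra.
- assert (t - 1 <> 0) by lra.
  exists (fun x => exp (t * ln ((x + 1) * / 2)) * / ((x + 1) * (t - 1))); intros x hx;
    split; auto_derive; repeat split; try lra;
    try (apply Rmult_integral_contrapositive_currified; lra); field; repeat split; lra.
Qed.

Lemma zeta_gen_twice_derivable a b s :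
  0 < a -> twice_derivable_on a b (zeta_gen s) (d2_zeta_gen s).
Proof.
intros ha; unfold zeta_gen, d2_zeta_gen, Rpower, Rdiv.
destruct (Req_EM_T s 1) as [->|s1].
- exists (fun x => - ln ((x + 1) * / (2 * x)) - (1 - x) * / (x * (x + 1))); intros x hx.
  assert (0 < (x + 1) * / (2 * x)) by (apply Rdiv_lt_0_compat; lra).
  split; auto_derive; repeat split; try lra;
    try (apply Rmult_integral_contrapositive_currified; lra).
  + field; lra.
  + rewrite Rminus_diag, Rmult_0_l, exp_0; field; lra.
- assert (s - 1 <> 0) by lra.
  exists (fun x => - exp ((s - 1) * ln ((x + 1) * / (2 * x))) * / (s - 1)
     - (1 - x) * exp ((s - 1) * ln ((x + 1) * / (2 * x))) * / (x * (x + 1))); intros x hx.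
  assert (0 < (x + 1) * / (2 * x)) by (apply Rdiv_lt_0_compat; lra).
  split; auto_derive; repeat split; try lra;
    try (apply Rmult_integral_contrapositive_currified; lra); field; repeat split; lra.
Qed.

Lemma omega_gen_1 t : omega_gen t 1 = 0.
Proof.
unfold omega_gen, Rpower; replace ((1 + 1) / 2) with 1 by field; rewrite ln_1.
destruct (Req_EM_T t 0); [|destruct (Req_EM_T t 1)]; [ring|ring|].
rewrite Rmult_0_r, exp_0; unfold Rdiv; ring.
Qed.

Lemma zeta_gen_1 s : zeta_gen s 1 = 0.
Proof. unfold zeta_gen; destruct (Req_EM_T s 1); unfold Rdiv; ring. Qed.

Lemma Omega_csiszar n t p q :
  (forall i, (i < n)%nat -> 0 < p i) -> (forall i, (i < n)%nat -> 0 < q i) -> rsum n q = 1 ->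
  Omega n t q p = rsum n (fun i => q i * omega_gen t (p i / q i)).
Proof.
intros hp hq sq; unfold Omega, omega_gen.
destruct (Req_EM_T t 0); [|destruct (Req_EM_T t 1)].
- apply rsum_ext; intros i hi; specialize (hp i hi); specialize (hq i hi).
  replace (2 * q i / (p i + q i)) with (/ ((p i / q i + 1) / 2)) by (field; lra).
  rewrite ln_Rinv; [ring|].
  assert (0 < p i / q i) by (apply Rdiv_lt_0_compat; lra); lra.
- apply rsum_ext; intros i hi; specialize (hp i hi); specialize (hq i hi).
  replace ((p i + q i) / (2 * q i)) with ((p i / q i + 1) / 2) by (field; lra).
  field; lra.
- symmetry; rewrite (rsum_ext n _ (fun i => / (t * (t - 1)) *
      (q i * Rpower ((p i + q i) / (2 * q i)) t - q i))), rsum_scal, rsum_minus, sq;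
    [reflexivity|]; intros i hi; specialize (hp i hi); specialize (hq i hi).
  replace ((p i + q i) / (2 * q i)) with ((p i / q i + 1) / 2) by (field; lra).
  field; lra.
Qed.

Lemma zeta_csiszar n s p q :
  (forall i, (i < n)%nat -> 0 < p i) -> (forall i, (i < n)%nat -> 0 < q i) ->
  zeta n s q p = rsum n (fun i => q i * zeta_gen s (p i / q i)).
Proof.
intros hp hq; unfold zeta, zeta_gen.
destruct (Req_EM_T s 1); [|rewrite <- rsum_scal]; apply rsum_ext; intros i hi;
  specialize (hp i hi); specialize (hq i hi);
  replace ((p i + q i) / (2 * p i)) with ((p i / q i + 1) / (2 * (p i / q i))) by (field; lra);
  field; lra.
Qed.

Definition dens_ratio (s t x : R) : R :=
  / Rpower x (s + 1) * Rpower ((x + 1) / 2) (s - t - 1).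

Lemma dens_ratio_pos s t x : 0 < dens_ratio s t x.
Proof.
unfold dens_ratio, Rpower; apply Rmult_lt_0_compat; [apply Rinv_0_lt_compat|]; apply exp_pos.
Qed.

Lemma d2_omega_gen_pos t x : 0 < x -> 0 < d2_omega_gen t x.
Proof.
intros hx; unfold d2_omega_gen, Rpower; apply Rdiv_lt_0_compat; [apply exp_pos|].
apply pow_lt; lra.
Qed.

Lemma d2_zeta_gen_factor s t x : 0 < x ->
  d2_zeta_gen s x = d2_omega_gen t x * (dens_ratio s t x * ((4 - s) * x + s)).
Proof.
intros hx; unfold d2_zeta_gen, d2_omega_gen, dens_ratio, Rpower.
replace (ln ((x + 1) / (2 * x))) with (ln ((x + 1) / 2) - ln x).
2:{ replace ((x + 1) / (2 * x)) with ((x + 1) / 2 * / x) by (field; lra).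
    rewrite ln_mult, ln_Rinv; try lra; try apply Rinv_0_lt_compat;
      try apply Rdiv_lt_0_compat; lra. }
replace ((s - 1) * (ln ((x + 1) / 2) - ln x)) with
  (t * ln ((x + 1) / 2) + (s - t - 1) * ln ((x + 1) / 2) - (s + 1) * ln x + ln x + ln x)
  by ring.
unfold Rminus; rewrite !exp_plus, exp_Ropp, exp_ln by lra.
field; split; [|split]; try lra; apply Rgt_not_eq, exp_pos.
Qed.

(* The exponent's derivative is -(s + (t + 1) x) / (x (x + 1)), of constant sign. *)
Lemma mul_dens_ratio_nonincreasing s t x y : 0 <= s -> -1 <= t -> 0 < x -> x <= y ->
  y * dens_ratio s t y <= x * dens_ratio s t x.
Proof.
intros hs ht hx hxy.
set (g z := s * ln z - (s - t - 1) * ln ((z + 1) / 2)).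
assert (hexp : forall z, 0 < z -> z * dens_ratio s t z = exp (- g z)).
{ intros z hz; unfold dens_ratio, g, Rpower.
  rewrite <- (exp_ln z) at 1 by lra; rewrite <- exp_Ropp, <- !exp_plus; f_equal; ring. }
assert (hg : g x <= g y).
{ apply (nondecreasing_of_derive_nonneg g (fun z => (s + (t + 1) * z) / (z * (z + 1))) x y);
    try lra; intros z hz.
  - unfold g, Rdiv; auto_derive; [lra|]; field; lra.
  - apply Rdiv_le_0_compat; nra. }
rewrite !hexp by lra.
destruct (Rle_lt_or_eq_dec _ _ hg) as [lt|eq]; [|rewrite eq; lra].
apply Rlt_le, exp_increasing; lra.
Qed.

Lemma d2_zeta_gen_bounds r R s t x : 0 < r -> r <= x <= R -> 0 <= s <= 4 -> -1 <= t ->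
  dens_ratio s t R * ((4 - s) * R + s) * d2_omega_gen t x <= d2_zeta_gen s x
  <= dens_ratio s t r * ((4 - s) * R + s) * d2_omega_gen t x.
Proof.
intros hr hx hs ht.
rewrite (d2_zeta_gen_factor s t x) by lra.
assert (hd2 := d2_omega_gen_pos t x ltac:(lra)).
assert (hR := mul_dens_ratio_nonincreasing s t x R ltac:(lra) ht ltac:(lra) ltac:(lra)).
assert (hr' := mul_dens_ratio_nonincreasing s t r x ltac:(lra) ht hr ltac:(lra)).
assert (pR := dens_ratio_pos s t R); assert (px := dens_ratio_pos s t x).
assert (pr := dens_ratio_pos s t r).
split; rewrite (Rmult_comm (d2_omega_gen t x)); apply Rmult_le_compat_r; try lra.
- (* [dens_ratio x * L x = (x dens_ratio x) ((4 - s) + s / x)], a product of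
     nonnegative nonincreasing factors. *)
  replace (dens_ratio s t R * ((4 - s) * R + s)) with
    (R * dens_ratio s t R * ((4 - s) + s / R)) by (field; lra).
  replace (dens_ratio s t x * ((4 - s) * x + s)) with
    (x * dens_ratio s t x * ((4 - s) + s / x)) by (field; lra).
  apply Rmult_le_compat; try nra.
  + apply Rplus_le_le_0_compat; [lra|apply Rdiv_le_0_compat; lra].
  + apply Rplus_le_compat_l, Rmult_le_compat_l; [lra|apply Rinv_le_contravar; lra].
- replace (dens_ratio s t x) with (x * dens_ratio s t x / x) by (field; lra).
  replace (dens_ratio s t r) with (r * dens_ratio s t r / r) by (field; lra).
  apply Rmult_le_compat; try nra.
  + apply Rdiv_le_0_compat; nra.
  + unfold Rdiv; apply Rmult_le_compat; try nra;
      [apply Rlt_le, Rinv_0_lt_compat; lra | apply Rinv_le_contravar; lra].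
Qed.

Theorem theorem4p1 (n : nat) (p q : nat -> R) (r Rr s t : R) :
  (2 <= n)%nat -> Gamma n p -> Gamma n q ->
  0 < r -> r <= Rr ->
  (forall i, (i < n)%nat -> r <= p i / q i <= Rr) ->
  0 <= s <= 4 -> -1 <= t ->
  / Rpower Rr (s + 1) * Rpower ((Rr + 1) / 2) (s - t - 1)
      * ((4 - s) * Rr + s) * Omega n t q p
  <= zeta n s q p
  <= / Rpower r (s + 1) * Rpower ((r + 1) / 2) (s - t - 1)
      * ((4 - s) * Rr + s) * Omega n t q p.
Proof.
intros _ [hp sp] [hq sq] hr hrR hx hs ht.
assert (h1 : r <= 1 <= Rr) by (apply (ratio_bounds_contain_1 n p q); auto; lra).
assert (homega := omega_gen_twice_derivable r Rr t hr).
assert (hzeta := zeta_gen_twice_derivable r Rr s hr).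
rewrite (Omega_csiszar n t p q), (zeta_csiszar n s p q), <- !csiszar_scal by auto.
set (lo := / Rpower Rr (s + 1) * _ * _); set (hi := / Rpower r (s + 1) * _ * _).
assert (hbounds := fun x hx0 => d2_zeta_gen_bounds r Rr s t x hr hx0 hs ht).
split.
- apply (csiszar_le n p q r Rr) with (F := zeta_gen s) (F2 := d2_zeta_gen s)
    (G := fun x => lo * omega_gen t x) (G2 := fun x => lo * d2_omega_gen t x);
    try (auto; lra).
  + apply twice_derivable_on_scal, homega.
  + intros x hx0; apply hbounds, hx0.
  + apply zeta_gen_1.
  + rewrite omega_gen_1; ring.
- apply (csiszar_le n p q r Rr) with (F := fun x => hi * omega_gen t x)
    (F2 := fun x => hi * d2_omega_gen t x) (G := zeta_gen s) (G2 := d2_zeta_gen s);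
    try (auto; lra).
  + apply twice_derivable_on_scal, homega.
  + intros x hx0; apply hbounds, hx0.
  + rewrite omega_gen_1; ring.
  + apply zeta_gen_1.
Qed.
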